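(* Consider the Normal Partizan Domination game on a star $K_{1,n}$ with $n\geq 1$, whose universal (center) vertex has color $C$, with $a$ leaves of color $A$ and $b=n-a$ leaves of color $B$. If $a=b$, the value is $*2$. If $|a-b|=1$, the value is $*$. If $a\geq b+2$, the value is $\uparrow^{[a-b-1]}*$. If $b\geq a+2$, the value is $\downarrow_{[b-a-1]}*$.
   Context: Normal Partizan Domination game: a finite graph $G$ has each vertex colored $A$, $B$ or $C$. Alice and Bob alternately select a vertex; Alice may only select vertices colored $A$ or $C$, Bob only vertices colored $B$ or $C$. A vertex $u$ dominates $v$ if $u=v$ or $uv$ is an edge. A vertex may be selected only if it is playable, i.e. it dominates at least one vertex not dominated by the previously selected vertices; the game ends when the selected vertices form a dominating set. Under normal play the player unable to move loses. The game is regarded as a partizan combinatorial game with Alice as Left and Bob as Right, and its value is its value in Conway's combinatorial game theory ($\{X\mid Y\}$ has Left options $X$ and Right options $Y$; $G=H$ iff $G+(-H)$ is a second-player win). Notation: $*=\{0\mid 0\}$, $*2=\{0,*\mid 0,*\}$, $\uparrow=\{0\mid *\}$, $\downarrow=\{*\mid 0\}$; $\uparrow^{[1]}=\uparrow$, $\uparrow^{[m]}=\{\uparrow^{[m-1]}\mid *\}$ for $m\geq 2$; $\downarrow_{[1]}=\downarrow$, $\downarrow_{[m]}=\{*\mid \downarrow_{[m-1]}\}$ for $m\geq 2$; $J*$ denotes $J+*$. *)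

From mathcomp Require Import all_boot.
Set Implicit Arguments. Unset Strict Implicit. Unset Printing Implicit Defensive.

Inductive game : Type := Game : seq game -> seq game -> game.

Definition left_opts (G : game) := let: Game L _ := G in L.
Definition right_opts (G : game) := let: Game _ R := G in R.

Fixpoint gadd (G H : game) {struct G} : game :=
  match G with Game GL GR =>
    let fix addH (H : game) : game :=
      match H with Game HL HR =>
        Game ([seq gadd g H | g <- GL] ++ [seq addH h | h <- HL])
             ([seq gadd g H | g <- GR] ++ [seq addH h | h <- HR])
      end in addH H
  end.

Fixpoint gneg (G : game) : game :=
  match G with Game L R => Game [seq gneg g | g <- R] [seq gneg g | g <- L] end.

(** Normal play: (Left wins moving first, Right wins moving first).
    A player with no move loses. *)
Fixpoint wins (G : game) : bool * bool :=
  match G with Game L R =>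
    (has (fun g => ~~ (wins g).2) L, has (fun g => ~~ (wins g).1) R)
  end.

Definition second_player_win (G : game) : Prop :=
  ~~ (wins G).1 /\ ~~ (wins G).2.

Definition game_eq (G H : game) : Prop := second_player_win (gadd G (gneg H)).

Definition gzero : game := Game [::] [::].
Definition gstar : game := Game [:: gzero] [:: gzero].
Definition gstar2 : game := Game [:: gzero; gstar] [:: gzero; gstar].
Definition gup : game := Game [:: gzero] [:: gstar].
Definition gdown : game := Game [:: gstar] [:: gzero].

(** up^[m] (m >= 1): up^[1] = up, up^[m] = { up^[m-1] | * }.
    (The value at m = 0 is an unused junk value.) *)
Fixpoint up_pow (m : nat) : game :=
  match m with
  | 0 => gup
  | 1 => gup
  | m'.+1 => Game [:: up_pow m'] [:: gstar]
  end.

Fixpoint down_pow (m : nat) : game :=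
  match m with
  | 0 => gdown
  | 1 => gdown
  | m'.+1 => Game [:: gstar] [:: down_pow m']
  end.

Inductive color := colA | colB | colC.
Definition color_eqb (x y : color) : bool :=
  match x, y with colA, colA | colB, colB | colC, colC => true | _, _ => false end.

Section Domination.
Variables (T : finType) (adj : rel T) (col : T -> color).

Definition cnbhd (v : T) : {set T} := [set u | (u == v) || adj v u].

Definition alice_can (v : T) : bool := ~~ color_eqb (col v) colB.
Definition bob_can (v : T) : bool := ~~ color_eqb (col v) colA.

Definition playable (D : {set T}) (v : T) : bool := ~~ (cnbhd v \subset D).

(** Game tree from the position whose dominated set is D; each move strictly
    enlarges D, so fuel #|T| suffices. *)
Fixpoint dom_game_from (fuel : nat) (D : {set T}) : game :=
  match fuel with
  | 0 => gzero
  | k.+1 =>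
    Game [seq dom_game_from k (D :|: cnbhd v) | v <- enum T & alice_can v && playable D v]
         [seq dom_game_from k (D :|: cnbhd v) | v <- enum T & bob_can v && playable D v]
  end.

Definition dom_game : game := dom_game_from #|T| set0.
End Domination.

Definition star_adj (n : nat) : rel 'I_n.+1 :=
  fun u v => (u == ord0) != (v == ord0).

(* In a star every closed neighbourhood contains the centre, so after the first
   move the centre is dominated and a move on a leaf dominates only that leaf.
   A position is thus described by the numbers x, y of undominated A- and
   B-leaves: either player may take the centre, ending the game, or dominate a
   leaf of their own colour, moving to (x-1, y) or (x, y-1). By induction on
   x + y the position equals 0 at (0, 0), *2 when x = y > 0, ↑^[m]* when
   x = y + m + 1 (with ↑^[0]* = * ) and its negative when y = x + m + 1. In
   canonical form ↑^[m+1]* = {0, ↑^[m]* | 0}, and the induction step rests on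
   the right option ↑^[m+2]* of {0, ↑^[m]* | 0, ↑^[m+2]*} being reversible
   through ↑^[m+1]*. *)

From HB Require Import structures.
From mathcomp Require Import all_boot zify.
Set Implicit Arguments. Unset Strict Implicit. Unset Printing Implicit Defensive.

Fixpoint gsize (G : game) : nat :=
  let: Game L R := G in (sumn (map gsize L) + sumn (map gsize R)).+1.

(* Encoding games as generic trees gives [game] an eqType, so that options
   can be handled with [\in]. *)
Fixpoint tree_of_game (G : game) : GenTree.tree unit :=
  let: Game L R := G in
  GenTree.Node (size L) (map tree_of_game L ++ map tree_of_game R).

Fixpoint game_of_tree (t : GenTree.tree unit) : game :=
  if t is GenTree.Node k ts then
    let gs := map game_of_tree ts in Game (take k gs) (drop k gs)
  else Game [::] [::].

Lemma tree_of_gameK : cancel tree_of_game game_of_tree.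
Proof.
move=> G; have [n] := ubnP (gsize G); elim: n G => // n IH [L R] /= ltGn.
have mapK s : sumn (map gsize s) < n -> map (game_of_tree \o tree_of_game) s = s.
  by elim: s => //= g s IHs lt_s; rewrite IH ?IHs //; lia.
rewrite map_cat -!map_comp take_size_cat ?drop_size_cat ?size_map //.
by rewrite !mapK //; lia.
Qed.

HB.instance Definition _ := Equality.copy game (can_type tree_of_gameK).

Lemma gsize_le_sumn s g : g \in s -> gsize g <= sumn (map gsize s).
Proof. by elim: s => //= x s IH; rewrite in_cons => /predU1P [->|/IH]; lia. Qed.

Lemma gsize_left G g : g \in left_opts G -> gsize g < gsize G.
Proof. by case: G => L R /gsize_le_sumn /=; lia. Qed.

Lemma gsize_right G g : g \in right_opts G -> gsize g < gsize G.
Proof. by case: G => L R /gsize_le_sumn /=; lia. Qed.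

Definition gsub G H := gadd G (gneg H).

Lemma wins_gsub GL GR HL HR :
  wins (gsub (Game GL GR) (Game HL HR)) =
  (has (fun g => ~~ (wins (gsub g (Game HL HR))).2) GL ||
   has (fun h => ~~ (wins (gsub (Game GL GR) h)).2) HR,
   has (fun g => ~~ (wins (gsub g (Game HL HR))).1) GR ||
   has (fun h => ~~ (wins (gsub (Game GL GR) h)).1) HL).
Proof. by rewrite /= !has_cat !has_map. Qed.

Lemma wins_gsub_swap G H : (wins (gsub G H)).1 = (wins (gsub H G)).2.
Proof.
have [n] := ubnP (gsize G + gsize H); elim: n G H => // n IH G H lt_n.
(* Each of the two identities needs the other one on smaller games. *)
suff : (wins (gsub G H)).1 = (wins (gsub H G)).2 /\
       (wins (gsub H G)).1 = (wins (gsub G H)).2 by case.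
case: G H lt_n => [GL GR] [HL HR] lt_n; rewrite !wins_gsub /=.
split; rewrite orbC; congr orb; apply: eq_in_has => x x_opt; congr negb.
- by rewrite IH //; have := gsize_right (G := Game HL HR) x_opt; lia.
- by rewrite IH //; have := gsize_left (G := Game GL GR) x_opt; lia.
- by rewrite IH //; have := gsize_right (G := Game GL GR) x_opt; lia.
- by rewrite IH //; have := gsize_left (G := Game HL HR) x_opt; lia.
Qed.

Definition gle G H : bool := ~~ (wins (gsub H G)).2.

Definition gequiv G H : bool := gle G H && gle H G.

Lemma gleE G H :
  gle G H = ~~ has (gle H) (left_opts G) && ~~ has (gle^~ G) (right_opts H).
Proof.
case: G H => [GL GR] [HL HR]; rewrite {1}/gle wins_gsub /= negb_or andbC.
by congr (~~ _ && ~~ _); apply: eq_has => x; rewrite /gle wins_gsub_swap.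
Qed.

Lemma game_eqE G H : game_eq G H <-> gequiv G H.
Proof.
rewrite /game_eq /second_player_win -/(gsub G H) wins_gsub_swap.
by split => [[? ?]|/andP]; first apply/andP.
Qed.

Lemma gleP G H :
  reflect ({in left_opts G, forall g, ~~ gle H g} /\
           {in right_opts H, forall h, ~~ gle h G})
          (gle G H).
Proof.
by rewrite gleE; apply: (iffP andP) => -[optsL optsR]; split; apply/hasPn.
Qed.

Lemma gle_left_opt G H g : g \in left_opts G -> gle H g -> ~~ gle G H.
Proof. by move=> g_opt; apply: contraL => /gleP[/(_ g g_opt)]. Qed.

Lemma gle_right_opt G H h : h \in right_opts H -> gle h G -> ~~ gle G H.
Proof. by move=> h_opt; apply: contraL => /gleP[_ /(_ h h_opt)]. Qed.

Lemma gle_refl G : gle G G.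
Proof.
have [n] := ubnP (gsize G); elim: n G => // n IH G lt_n.
apply/gleP; split=> g g_opt.
- by apply: (gle_left_opt g_opt); apply: IH; have := gsize_left g_opt; lia.
- by apply: (gle_right_opt g_opt); apply: IH; have := gsize_right g_opt; lia.
Qed.

Lemma gle_trans H G K : gle G H -> gle H K -> gle G K.
Proof.
have [n] := ubnP (gsize G + gsize H + gsize K); elim: n G H K => // n IH.
move=> G H K lt_n le_GH le_HK; apply/gleP; split=> g g_opt.
- case/gleP: le_GH => /(_ g g_opt) + _; apply: contra => le_Kg.
  by apply: (IH _ _ _ _ le_HK le_Kg); have := gsize_left g_opt; lia.
- case/gleP: le_HK => _ /(_ g g_opt); apply: contra => le_gG.
  by apply: (IH _ _ _ _ le_gG le_GH); have := gsize_right g_opt; lia.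
Qed.

Lemma left_opts_gneg G : left_opts (gneg G) = map gneg (right_opts G).
Proof. by case: G. Qed.

Lemma right_opts_gneg G : right_opts (gneg G) = map gneg (left_opts G).
Proof. by case: G. Qed.

Lemma gle_opp G H : gle (gneg H) (gneg G) = gle G H.
Proof.
have [n] := ubnP (gsize G + gsize H); elim: n G H => // n IH G H lt_n.
rewrite gleE [RHS]gleE left_opts_gneg right_opts_gneg !has_map andbC.
congr (~~ _ && ~~ _); apply: eq_in_has => x x_opt /=; rewrite IH //.
- by have := gsize_left x_opt; lia.
- by have := gsize_right x_opt; lia.
Qed.

Lemma gequiv_refl G : gequiv G G.
Proof. by rewrite /gequiv gle_refl. Qed.

Lemma gequiv_sym G H : gequiv G H = gequiv H G.
Proof. by rewrite /gequiv andbC. Qed.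

Lemma gequiv_trans H G K : gequiv G H -> gequiv H K -> gequiv G K.
Proof.
case/andP=> le_GH le_HG /andP[le_HK le_KH].
by rewrite /gequiv (gle_trans le_GH le_HK) (gle_trans le_KH le_HG).
Qed.

Lemma gequiv_opp G H : gequiv (gneg G) (gneg H) = gequiv G H.
Proof. by rewrite /gequiv !gle_opp andbC. Qed.

Lemma gle_gequiv G G' H H' : gequiv G G' -> gequiv H H' -> gle G H = gle G' H'.
Proof.
case/andP=> le_GG' le_G'G /andP[le_HH' le_H'H]; apply/idP/idP => le_GH.
- by apply: gle_trans le_HH'; apply: gle_trans le_GH.
- by apply: gle_trans le_H'H; apply: gle_trans le_GH.
Qed.

Lemma gle_left_optF G g : g \in left_opts G -> gle G g = false.
Proof. by move=> g_opt; apply/negbTE/(gle_left_opt g_opt)/gle_refl. Qed.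

Lemma gle_right_optF H h : h \in right_opts H -> gle h H = false.
Proof. by move=> h_opt; apply/negbTE/(gle_right_opt h_opt)/gle_refl. Qed.

Definition opts_sub (L L' : seq game) : bool := all (fun g => has (gequiv g) L') L.

Definition opts_equiv (L L' : seq game) : bool := opts_sub L L' && opts_sub L' L.

Lemma gle_opts_sub GL GR HL HR :
  opts_sub GL HL -> opts_sub HR GR -> gle (Game GL GR) (Game HL HR).
Proof.
move=> /allP subL /allP subR; apply/gleP; split=> g g_opt.
- have/hasP[g' g'_opt eq_gg'] := subL g g_opt.
  by rewrite (gle_gequiv (gequiv_refl _) eq_gg') gle_left_optF.
- have/hasP[g' g'_opt eq_gg'] := subR g g_opt.
  by rewrite (gle_gequiv eq_gg' (gequiv_refl _)) gle_right_optF.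
Qed.

Lemma gequiv_opts GL GR HL HR :
  opts_equiv GL HL -> opts_equiv GR HR -> gequiv (Game GL GR) (Game HL HR).
Proof. by case/andP=> ? ? /andP[? ?]; apply/andP; split; apply: gle_opts_sub. Qed.

Lemma gneg_Game L R : gneg (Game L R) = Game (map gneg R) (map gneg L).
Proof. by []. Qed.

Lemma gadd_Game GL GR HL HR :
  gadd (Game GL GR) (Game HL HR) =
  Game (map (gadd^~ (Game HL HR)) GL ++ map (gadd (Game GL GR)) HL)
       (map (gadd^~ (Game HL HR)) GR ++ map (gadd (Game GL GR)) HR).
Proof. by []. Qed.

Lemma gaddg0 G : gadd G gzero = G.
Proof.
have [n] := ubnP (gsize G); elim: n G => // n IH [L R] lt_n.
rewrite gadd_Game !cats0; congr Game; rewrite -[RHS]map_id; apply/eq_in_map => g g_opt.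
- by apply: IH; have := gsize_left (G := Game L R) g_opt; lia.
- by apply: IH; have := gsize_right (G := Game L R) g_opt; lia.
Qed.

Lemma gnegK : involutive gneg.
Proof.
move=> G; have [n] := ubnP (gsize G); elim: n G => // n IH [L R] lt_n /=.
rewrite -!map_comp; congr Game; rewrite -[RHS]map_id; apply/eq_in_map => g g_opt /=.
- by apply: IH; have := gsize_left (G := Game L R) g_opt; lia.
- by apply: IH; have := gsize_right (G := Game L R) g_opt; lia.
Qed.

Lemma gneg_add G H : gneg (gadd G H) = gadd (gneg G) (gneg H).
Proof.
have [n] := ubnP (gsize G + gsize H); elim: n G H => // n IH [GL GR] [HL HR] lt_n.
rewrite gadd_Game !gneg_Game gadd_Game !map_cat -!map_comp.
congr (Game (_ ++ _) (_ ++ _)); apply/eq_in_map => x x_opt; rewrite /comp IH //.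
- by have := gsize_right (G := Game GL GR) x_opt; lia.
- by have := gsize_right (G := Game HL HR) x_opt; lia.
- by have := gsize_left (G := Game GL GR) x_opt; lia.
- by have := gsize_left (G := Game HL HR) x_opt; lia.
Qed.

Lemma gadd_star L R :
  gadd (Game L R) gstar =
  Game (map (gadd^~ gstar) L ++ [:: Game L R]) (map (gadd^~ gstar) R ++ [:: Game L R]).
Proof.
have -> : gadd (Game L R) gstar =
  Game (map (gadd^~ gstar) L ++ [:: gadd (Game L R) gzero])
       (map (gadd^~ gstar) R ++ [:: gadd (Game L R) gzero]) by [].
by rewrite gaddg0.
Qed.

(* Proves [gle G H] when every left option of [G] is a left option of [H] or
   has [H] as a right option, and dually for the right options of [H]. *)
Ltac gle_by_options :=
  apply/gleP; split=> x /=;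
  repeat (rewrite in_cons => /predU1P[->|]); rewrite ?in_nil //; apply/negbT;
  first [ by apply: gle_left_optF; rewrite !inE eqxx ?orbT
        | by apply: gle_right_optF; rewrite !inE eqxx ?orbT ].

(* The canonical form of ↑^[m]*, with ↑^[0]* = *. *)
Fixpoint upstar (m : nat) : game :=
  if m is m'.+1 then Game [:: gzero; upstar m'] [:: gzero] else gstar.

Lemma star_le_upstar m : gle gstar (upstar m.+1).
Proof. by gle_by_options. Qed.

Lemma zero_le_up_pow m : gle gzero (up_pow m).
Proof. by case: m => [|[|m]]; gle_by_options. Qed.

Lemma upstar_reversible m :
  gequiv (Game [:: gzero; upstar m] [:: gzero; upstar m.+2]) (upstar m.+1).
Proof. by apply/andP; split; gle_by_options. Qed.

Lemma up_pow_star m : gequiv (gadd (up_pow m.+1) gstar) (upstar m.+1).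
Proof.
(* Comparisons between closed games are decided by evaluating [wins]. *)
elim: m => [|m IH]; first by [].
set U := up_pow m.+2; set X := gadd (up_pow m.+1) gstar; set W := upstar m.+1.
set S := gadd gstar gstar; have S0 : gequiv S gzero by [].
have -> : gadd U gstar = Game [:: X; U] [:: S; U] by rewrite [U]/= gadd_star.
have -> : upstar m.+2 = Game [:: gzero; W] [:: gzero] by [].
have le_WX : gle W X by case/andP: IH.
have le_S0 : gle S gzero by case/andP: S0.
have le_0U : gle gzero U := zero_le_up_pow _.
apply/andP; split; apply/gleP; split=> x /=; rewrite !inE.
- case/orP=> /eqP->.
  + by rewrite (gle_gequiv (gequiv_refl _) IH) gle_left_optF // !inE eqxx orbT.
  + by apply: (gle_right_opt _ (star_le_upstar m.+1)); rewrite inE.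
- by move/eqP->; apply: (gle_right_opt _ le_S0); rewrite !inE eqxx.
- case/orP=> /eqP->.
  + by apply: (gle_left_opt _ le_0U); rewrite !inE eqxx orbT.
  + by apply: (gle_left_opt _ le_WX); rewrite !inE eqxx.
- case/orP=> /eqP->.
  + by rewrite (gle_gequiv S0 (gequiv_refl _)) gle_right_optF // inE.
  + by apply: (gle_right_opt _ le_0U); rewrite inE.
Qed.

(* The value of the star position with x undominated A-leaves and y
   undominated B-leaves, and the game listing its options. *)
Definition star_val (x y : nat) : game :=
  if y < x then upstar (x - y.+1)
  else if x < y then gneg (upstar (y - x.+1))
  else if x == 0 then gzero else gstar2.

Definition star_opts_game (x y : nat) : game :=
  Game ((if 0 < x + y then [:: gzero] else [::]) ++
        (if 0 < x then [:: star_val x.-1 y] else [::]))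
       ((if 0 < x + y then [:: gzero] else [::]) ++
        (if 0 < y then [:: star_val x y.-1] else [::])).

Lemma star_valC x y : star_val x y = gneg (star_val y x).
Proof.
rewrite /star_val; case: ltngtP => [lt_xy|lt_yx|->] //; first by rewrite gnegK.
by case: eqP.
Qed.

Lemma star_opts_gameC x y : star_opts_game x y = gneg (star_opts_game y x).
Proof.
rewrite /star_opts_game gneg_Game !map_cat addnC.
by congr (Game (_ ++ _) (_ ++ _)); case: ifP => //= _; rewrite star_valC.
Qed.

Lemma star_val_up d x y : x = d.+1 + y -> star_val x y = upstar d.
Proof. by move=> ->; rewrite /star_val ifT; [congr upstar|]; lia. Qed.

Lemma star_val_diag x : star_val x.+1 x.+1 = gstar2.
Proof. by rewrite /star_val ltnn. Qed.

Lemma star_opts_game_ge d y :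
  gequiv (star_opts_game (d + y) y) (star_val (d + y) y).
Proof.
rewrite /star_opts_game.
case: y d => [|y] [|[|d]]; rewrite ?addn0 ?addnS /=; try by [].
- rewrite (@star_val_up d) ?(@star_val_up d.+1) ?addn0 //; exact: gequiv_refl.
- by rewrite add0n star_valC (@star_val_up 0 _ y) // star_val_diag.
- by rewrite star_val_diag (@star_val_up 1 _ y) // (@star_val_up 0 _ y.+1).
- rewrite (@star_val_up d _ y.+1) ?(@star_val_up d.+2 _ y) ?(@star_val_up d.+1 _ y.+1);
    try lia.
  exact: upstar_reversible.
Qed.

Lemma star_opts_gameE x y : gequiv (star_opts_game x y) (star_val x y).
Proof.
case: (leqP y x) => [/subnK <-|/ltnW/subnK <-]; first exact: star_opts_game_ge.
by rewrite star_opts_gameC star_valC gequiv_opp; apply: star_opts_game_ge.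
Qed.

Lemma color_eqbP : Equality.axiom color_eqb.
Proof. by do 2 case; constructor. Qed.

HB.instance Definition _ := hasDecEq.Build color color_eqbP.

Section Star.

Variables (n : nat) (c : 'I_n.+1 -> color).
Hypotheses (n_gt0 : 0 < n) (c_center : c ord0 = colC)
           (c_leaf : forall v, v != ord0 -> c v <> colC).

Local Notation T := 'I_n.+1.
Local Notation adj := (@star_adj n).
Local Notation dom := (dom_game_from adj c).

Definition undom_count (p : color) (D : {set T}) : nat :=
  #|[set v | c v == p & v \notin D]|.

Definition star_inv (D : {set T}) : bool := (D == set0) || (ord0 \in D).

Lemma cnbhd_center : cnbhd adj ord0 = setT.
Proof. by apply/setP => u; rewrite !inE /star_adj eqxx; case: (u == ord0). Qed.

Lemma cnbhd_leaf v : v != ord0 -> cnbhd adj v = [set v; ord0].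
Proof.
by move=> /negbTE v0; apply/setP => u; rewrite !inE /star_adj v0; case: (u == ord0).
Qed.

Lemma leaf_color v : v != ord0 -> (c v == colA) || (c v == colB).
Proof. by move/c_leaf; case: (c v). Qed.

Lemma alice_canE v : alice_can c v = (v == ord0) || (c v == colA).
Proof.
by case: eqVneq => [->|/c_leaf]; rewrite /alice_can ?c_center //; case: (c v).
Qed.

Lemma bob_canE v : bob_can c v = (v == ord0) || (c v == colB).
Proof.
by case: eqVneq => [->|/c_leaf]; rewrite /bob_can ?c_center //; case: (c v).
Qed.

Lemma undom_count_gt0 p (D : {set T}) :
  reflect (exists2 v, c v == p & v \notin D) (0 < undom_count p D).
Proof.
apply: (iffP card_gt0P) => [[v]|[v cv vD]]; last by exists v; rewrite inE cv.
by rewrite inE => /andP[]; exists v.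
Qed.

Lemma playable_center (D : {set T}) : star_inv D ->
  playable adj D ord0 = (0 < undom_count colA D + undom_count colB D).
Proof.
move=> invD; rewrite /playable cnbhd_center addn_gt0.
apply/subsetPn/idP => [[u _ uD]|].
  have [v v0 vD] : exists2 v, v != ord0 & v \notin D.
    case/orP: invD => [/eqP D0|D_0]; last by exists u => //; apply: contraNneq uD => ->.
    by exists ord_max; rewrite ?D0 ?inE // -val_eqE /= -lt0n.
  by case/orP: (leaf_color v0) => cv; apply/orP; [left|right];
    apply/undom_count_gt0; exists v.
by case/orP=> /undom_count_gt0[v _ vD]; exists v.
Qed.

Lemma playable_leaf (D : {set T}) v : star_inv D -> v != ord0 ->
  playable adj D v = (v \notin D).
Proof.
move=> invD v0; rewrite /playable cnbhd_leaf //; apply/negb_inj; rewrite !negbK.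
apply/subsetP/idP => [/(_ v)|vD u]; first by apply; rewrite !inE eqxx.
rewrite !inE => /orP[]/eqP-> //.
by case/orP: invD => [/eqP D0|//]; rewrite D0 inE in vD.
Qed.

Lemma undom_count_move p (D : {set T}) v : p != colC -> v \notin D ->
  undom_count p (D :|: [set v; ord0]) = undom_count p D - (c v == p).
Proof.
move=> pC vD; rewrite /undom_count [in RHS](cardsD1 v) inE vD andbT addKn.
apply/eq_card => u; rewrite !inE.
have [->|_] := eqVneq u v; first by rewrite orbT andbF.
have [->|_] := eqVneq u ord0; first by rewrite c_center eq_sym (negbTE pC).
by rewrite !orbF.
Qed.

Lemma undom_count_le_card (D : {set T}) :
  undom_count colA D + undom_count colB D <= #|T|.
Proof.
rewrite /undom_count -cardsUI; set A := [set v | _ & _]; set B := [set v | _ & _].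
have -> : A :&: B = set0 by apply/setP => v; rewrite !inE; case: (c v); rewrite ?andbF.
by rewrite cards0 addn0 max_card.
Qed.

Lemma dom_setT k : dom k setT = gzero.
Proof.
case: k => //= k; congr Game; rewrite (@eq_filter _ _ pred0) ?filter_pred0 // => v;
  by rewrite /playable subsetT andbF.
Qed.

Lemma mem_moves (D : {set T}) p (can : pred T) v :
  star_inv D -> (forall v, can v = (v == ord0) || (c v == p)) ->
  v \in [seq v <- enum T | can v && playable adj D v] =
  if v == ord0 then 0 < undom_count colA D + undom_count colB D
  else (c v == p) && (v \notin D).
Proof.
move=> invD canE; rewrite mem_filter mem_enum andbT canE.
by case: eqVneq => [->|v0]; rewrite ?playable_center ?playable_leaf.
Qed.

Lemma dom_opts_equiv k (D : {set T}) p (can : pred T) tgt :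
  star_inv D -> p != colC -> (forall v, can v = (v == ord0) || (c v == p)) ->
  (forall v, c v == p -> v \notin D -> gequiv (dom k (D :|: [set v; ord0])) tgt) ->
  opts_equiv [seq dom k (D :|: cnbhd adj v) | v <- enum T & can v && playable adj D v]
             ((if 0 < undom_count colA D + undom_count colB D then [:: gzero]
               else [::]) ++
              (if 0 < undom_count p D then [:: tgt] else [::])).
Proof.
move=> invD pC canE tgtE; have opt v := mem_moves v invD canE.
apply/andP; split; apply/allP => g.
- case/mapP=> v; rewrite opt; case: eqVneq => [->|v0] => [pos|/andP[cv vD]] ->.
    by rewrite cnbhd_center setUT dom_setT pos.
  have -> : 0 < undom_count p D by apply/undom_count_gt0; exists v.
  by rewrite cnbhd_leaf // has_cat /= tgtE ?orbT.
- rewrite mem_cat => /orP[]; case: ifP => // pos; rewrite inE => /eqP->.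
    apply/hasP; exists (dom k (D :|: cnbhd adj ord0)).
      by apply/mapP; exists ord0; rewrite ?opt ?eqxx.
    by rewrite cnbhd_center setUT dom_setT gequiv_refl.
  case/undom_count_gt0: pos => v cv vD; have v0 : v != ord0.
    by apply: contraNneq pC => v0; rewrite -(eqP cv) v0 c_center.
  apply/hasP; exists (dom k (D :|: cnbhd adj v)).
    by apply/mapP; exists v; rewrite ?opt ?(negbTE v0) ?cv.
  by rewrite cnbhd_leaf // gequiv_sym tgtE.
Qed.

Lemma dom_gequiv_star_val k (D : {set T}) :
  star_inv D -> undom_count colA D + undom_count colB D <= k ->
  gequiv (dom k D) (star_val (undom_count colA D) (undom_count colB D)).
Proof.
elim: k D => [|k IH] D invD le_k.
  by move: le_k; rewrite leqn0 addn_eq0 => /andP[/eqP-> /eqP->].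
have inv_move v : star_inv (D :|: [set v; ord0]) by rewrite /star_inv !inE eqxx !orbT.
apply: gequiv_trans (star_opts_gameE _ _); apply: gequiv_opts.
- apply: dom_opts_equiv => // [v|v cv vD]; first exact: alice_canE.
  have pos : 0 < undom_count colA D by apply/undom_count_gt0; exists v.
  have := IH (D :|: [set v; ord0]).
  rewrite !undom_count_move // (eqP cv) /= subn0 subn1.
  by apply => //; lia.
- apply: dom_opts_equiv => // [v|v cv vD]; first exact: bob_canE.
  have pos : 0 < undom_count colB D by apply/undom_count_gt0; exists v.
  have := IH (D :|: [set v; ord0]).
  rewrite !undom_count_move // (eqP cv) /= subn0 subn1.
  by apply => //; lia.
Qed.

End Star.

Lemma down_pow_star m : gequiv (gadd (down_pow m.+1) gstar) (gneg (upstar m.+1)).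
Proof.
have -> : down_pow m.+1 = gneg (up_pow m.+1) by elim: m => //= -[|m] ->.
by rewrite -[gstar]/(gneg gstar) -gneg_add gequiv_opp up_pow_star.
Qed.

Theorem theorem7 (n a b : nat) (c : 'I_n.+1 -> color) :
  1 <= n ->
  c ord0 = colC ->
  (forall i : 'I_n.+1, i != ord0 -> c i <> colC) ->
  #|[set i | color_eqb (c i) colA]| = a ->
  #|[set i | color_eqb (c i) colB]| = b ->
  let G := dom_game (@star_adj n) c in
  (a = b -> game_eq G gstar2) /\
  ((a = b.+1 \/ b = a.+1) -> game_eq G gstar) /\
  (b.+2 <= a -> game_eq G (gadd (up_pow (a - b - 1)) gstar)) /\
  (a.+2 <= b -> game_eq G (gadd (down_pow (b - a - 1)) gstar)).
Proof.
move=> n_gt0 c_center c_leaf cardA cardB G.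
have undom0 p : undom_count c p set0 = #|[set i | color_eqb (c i) p]|.
  by apply: eq_card => i; rewrite !inE andbT.
have inv0 : star_inv (set0 : {set 'I_n.+1}) by rewrite /star_inv eqxx.
have eqG : gequiv G (star_val a b).
  rewrite -cardA -cardB -!undom0; exact: dom_gequiv_star_val (undom_count_le_card _ _).
have ab_gt0 : 0 < a + b.
  rewrite -cardA -cardB -!undom0 -playable_center //.
  by apply/subsetPn; exists ord0; rewrite ?inE.
split; [|split; [|split]] => hab; apply/game_eqE; apply: gequiv_trans eqG _.
- by rewrite hab -(prednK (_ : 0 < b)) ?star_val_diag ?gequiv_refl //; lia.
- case: hab => ->; first by rewrite (@star_val_up 0).
  by rewrite star_valC (@star_val_up 0).
- rewrite (@star_val_up (a - b.+2).+1); last lia.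
  have -> : a - b - 1 = (a - b.+2).+1 by lia.
  by rewrite gequiv_sym up_pow_star.
- rewrite star_valC (@star_val_up (b - a.+2).+1); last lia.
  have -> : b - a - 1 = (b - a.+2).+1 by lia.
  by rewrite gequiv_sym down_pow_star.
Qed.
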